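(* Let $\mathbb{L}$ be a Markov Logic Network of signature $\sigma$ and let $\Pi_{\mathbb{L}}$ be the $\mathrm{LP}^{\mathrm{MLN}}$ program obtained from (the ground instance of) $\mathbb{L}$ by turning each weighted formula $w:F$ into the weighted rule $w:\ \bot\leftarrow\neg F$ and adding the weighted rule $w:\ A\leftarrow\neg\neg A$ for every ground atom $A$ of $\sigma$, where $w$ is an arbitrary real number. Then for every Herbrand interpretation $I$ of $\sigma$, $P_{\mathbb{L}}(I)=P_{\Pi_{\mathbb{L}}}(I)$.
   Context: $\sigma$ is a first-order signature with no function constants of positive arity; Herbrand interpretations are identified with sets of ground atoms. A Markov Logic Network (MLN) $\mathbb{L}$ is a finite set of weighted formulas $w:F$, $F$ a first-order formula and $w$ a real number or the symbol $\alpha$ (hard weight), identified with its ground instance (each ground instance of $F$, a propositional combination of ground atoms, inherits $w$). For an interpretation $I$, $\mathbb{L}_I$ is the set of $w:F\in\mathbb{L}$ with $I\models F$, $W_{\mathbb{L}}(I)=\exp(\sum_{w:F\in\mathbb{L}_I}w)$, and $P_{\mathbb{L}}(I)=\lim_{\alpha\to\infty}W_{\mathbb{L}}(I)/\sum_J W_{\mathbb{L}}(J)$, the sum over all Herbrand interpretations $J$, with $\alpha$ treated as a real parameter. A formula is negative if every occurrence of every atom is in the scope of negation. A rule has the form $A\leftarrow B\wedge N$ ($A$ a possibly empty disjunction of atoms, $B$ a conjunction of atoms, $N$ a negative formula), identified with $B\wedge N\rightarrow A$. For a ground program $\Pi$, the reduct $\Pi^I$ consists of $A\leftarrow B$ for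 all rules $A\leftarrow B\wedge N$ with $I\models N$; $I$ is a stable model of $\Pi$ if it is a minimal model of $\Pi^I$. An $\mathrm{LP}^{\mathrm{MLN}}$ program is a finite set of weighted rules $w:R$ ($w$ real or $\alpha$); $\Pi_I=\{w:R\in\Pi\mid I\models R\}$, $\overline{\Pi_I}$ its unweighted rules; $\mathrm{SM}[\Pi]=\{I\mid I\text{ is a stable model of }\overline{\Pi_I}\}$; $W_\Pi(I)=\exp(\sum_{w:R\in\Pi_I}w)$ if $I\in\mathrm{SM}[\Pi]$, else $0$; $P_\Pi(I)=\lim_{\alpha\to\infty}W_\Pi(I)/\sum_{J\in\mathrm{SM}[\Pi]}W_\Pi(J)$. *)

From HB Require Import structures.
From mathcomp Require Import all_boot all_order all_algebra.
From mathcomp Require Import all_classical all_reals all_analysis.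

Set Implicit Arguments.
Unset Strict Implicit.
Unset Printing Implicit Defensive.

Import Order.TTheory GRing.Theory Num.Theory.
Import numFieldNormedType.Exports.
Local Open Scope classical_set_scope.
Local Open Scope ring_scope.

(* Ground level: [Atom] is the (finite) Herbrand base of sigma; a Herbrand
   interpretation is a set of ground atoms, i.e. an element of {set Atom}. *)

Section MLN.
Variable Atom : finType.

Inductive lpform :=
  | FAtom of Atom
  | FBot
  | FTop
  | FNeg of lpform
  | FAnd of lpform & lpform
  | FOr of lpform & lpform
  | FImp of lpform & lpform.

Fixpoint sat (I : {set Atom}) (f : lpform) : bool :=
  match f with
  | FAtom a => a \in I
  | FBot => false
  | FTop => true
  | FNeg g => ~~ sat I g
  | FAnd g h => sat I g && sat I h
  | FOr g h => sat I g || sat I h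
  | FImp g h => sat I g ==> sat I h
  end.

Fixpoint negative (f : lpform) : bool :=
  match f with
  | FAtom _ => false
  | FBot | FTop => true
  | FNeg _ => true
  | FAnd g h | FOr g h | FImp g h => negative g && negative h
  end.

Inductive lweight (R : Type) := Soft of R | Hard.

Definition wval (R : Type) (alpha : R) (w : lweight R) : R :=
  match w with Soft r => r | Hard => alpha end.

(* A (ground) rule  A <- B /\ N : head = disjunction of atoms [rhead],
   positive body = conjunction of atoms [rpos], negative part N = [rneg]. *)
Record rule := Rule { rhead : seq Atom; rpos : seq Atom; rneg : lpform }.

Definition sat_rule (I : {set Atom}) (r : rule) : bool :=
  (all (fun a => a \in I) (rpos r) && sat I (rneg r)) ==>
    has (fun a => a \in I) (rhead r).

Definition sat_prule (J : {set Atom}) (r : seq Atom * seq Atom) : bool :=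
  all (fun a => a \in J) r.2 ==> has (fun a => a \in J) r.1.

Definition reduct (P : seq rule) (I : {set Atom}) : seq (seq Atom * seq Atom) :=
  [seq (rhead r, rpos r) | r <- P & sat I (rneg r)].

Definition pmodel (P : seq (seq Atom * seq Atom)) (J : {set Atom}) : bool :=
  all (sat_prule J) P.

Definition minimal_pmodel (P : seq (seq Atom * seq Atom)) (I : {set Atom}) :=
  pmodel P I && [forall J : {set Atom}, (J \proper I) ==> ~~ pmodel P J].

Definition stable_model (P : seq rule) (I : {set Atom}) : bool :=
  minimal_pmodel (reduct P I) I.

Variable R : realType.

Definition mln := seq (lweight R * lpform).

Definition W_mln (L : mln) (alpha : R) (I : {set Atom}) : R :=
  expR (\sum_(wf <- L | sat I wf.2) wval alpha wf.1).

Definition P_mln (L : mln) (I : {set Atom}) : R :=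
  lim ((W_mln L alpha I / \sum_(J : {set Atom}) W_mln L alpha J : R)
         @[alpha --> +oo]).

Definition lpmln := seq (lweight R * rule).

Definition prog_I (P : lpmln) (I : {set Atom}) : lpmln :=
  [seq wr <- P | sat_rule I wr.2].

Definition SM (P : lpmln) (I : {set Atom}) : bool :=
  stable_model (map snd (prog_I P I)) I.

Definition W_lp (P : lpmln) (alpha : R) (I : {set Atom}) : R :=
  if SM P I then expR (\sum_(wr <- prog_I P I) wval alpha wr.1) else 0.

Definition P_lp (P : lpmln) (I : {set Atom}) : R :=
  lim ((W_lp P alpha I / \sum_(J : {set Atom} | SM P J) W_lp P alpha J : R)
         @[alpha --> +oo]).

Definition mln_to_lpmln (L : mln) (w0 : R) : lpmln :=
  [seq (wf.1, Rule [::] [::] (FNeg wf.2)) | wf <- L] ++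
  [seq (Soft w0, Rule [:: A] [::] (FNeg (FNeg (FAtom A)))) | A <- enum Atom].

End MLN.

From HB Require Import structures.
From mathcomp Require Import all_boot all_order all_algebra.
From mathcomp Require Import all_classical all_reals all_analysis.

(* Every interpretation J is a stable model of Pi_L: J satisfies all rules of
   (Pi_L)_J, and the reduct keeps the fact  A <-  for each atom A of J (from
   A <- not not A), which rules out every smaller model.  Moreover the weight of
   J in Pi_L is its MLN weight times the constant factor exp(#|Atom| w), which
   cancels in the normalisation, so the two distributions agree for every
   alpha and hence in the limit. *)

Set Implicit Arguments.
Unset Strict Implicit.
Unset Printing Implicit Defensive.

Import Order.TTheory GRing.Theory Num.Theory.
Local Open Scope ring_scope.

Lemma normalize_scale (F : fieldType) (T : finType) (f : T -> F) (c : F) (t : T) :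
  c != 0 -> f t * c / \sum_u f u * c = f t / \sum_u f u.
Proof.
by move=> c_neq0; rewrite -big_distrl /= invfM mulrACA divff ?mulr1.
Qed.

Section StableModels.
Variable Atom : finType.
Implicit Types (P : seq (rule Atom)) (Q : seq (seq Atom * seq Atom)) (I J : {set Atom}).

Lemma pmodel_reduct P I : all (sat_rule I) P -> pmodel (reduct P I) I.
Proof.
rewrite /pmodel /reduct all_map all_filter; apply: sub_all => r.
by rewrite /sat_rule /sat_prule /=; case: (sat I (rneg r)); rewrite ?andbT.
Qed.

Lemma pmodel_fact Q J a : ([:: a], [::]) \in Q -> pmodel Q J -> a \in J.
Proof. by move=> aQ /allP/(_ _ aQ); rewrite /sat_prule /= orbF. Qed.

Lemma minimal_pmodel_facts Q I :
  pmodel Q I -> {in I, forall a, ([:: a], [::]) \in Q} -> minimal_pmodel Q I.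
Proof.
move=> QI factsQ; rewrite /minimal_pmodel QI; apply/forallP => J.
apply/implyP => /properP [_ [a aI aNJ]].
exact: contra (pmodel_fact (factsQ a aI)) aNJ.
Qed.

Lemma all_sat_rule_prog_I (R : realType) (P : lpmln Atom R) I :
  all (sat_rule I) (map snd (prog_I P I)).
Proof. by rewrite /prog_I; elim: P => //= wr P IH; case: ifP => //= ->. Qed.

End StableModels.

Section Translation.
Variables (R : realType) (Atom : finType) (L : mln Atom R) (w : R).

Lemma reduct_mln_to_lpmln_fact (J : {set Atom}) a :
  a \in J -> ([:: a], [::]) \in reduct (map snd (prog_I (mln_to_lpmln L w) J)) J.
Proof.
move=> aJ; rewrite -has_pred1 /reduct has_map !has_count count_filter /prog_I.
rewrite count_map count_filter count_cat !count_map addn_gt0 -[X in _ || X]has_count.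
apply/orP; right; apply/hasP; exists a; first by rewrite -enumT mem_enum.
by rewrite /= /sat_rule /= negbK aJ orbF eqxx.
Qed.

Lemma SM_mln_to_lpmln J : SM (mln_to_lpmln L w) J.
Proof.
apply: minimal_pmodel_facts; first exact/pmodel_reduct/all_sat_rule_prog_I.
exact: reduct_mln_to_lpmln_fact.
Qed.

Lemma sum_prog_I_mln_to_lpmln alpha J :
  \sum_(wr <- prog_I (mln_to_lpmln L w) J) wval alpha wr.1 =
  \sum_(wf <- L | sat J wf.2) wval alpha wf.1 + w *+ #|Atom|.
Proof.
rewrite big_filter big_cat !big_map /=; congr (_ + _).
  by apply: eq_bigl => wf; rewrite /sat_rule /= implybF negbK.
rewrite (eq_bigl xpredT) => [|A]; last by rewrite /sat_rule /= negbK orbF implybb.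
by rewrite -enumT big_enum sumr_const.
Qed.

Lemma W_lp_mln_to_lpmln alpha J :
  W_lp (mln_to_lpmln L w) alpha J = W_mln L alpha J * expR (w *+ #|Atom|).
Proof. by rewrite /W_lp SM_mln_to_lpmln sum_prog_I_mln_to_lpmln expRD. Qed.

End Translation.

Theorem theorem2 (R : realType) (Atom : finType)
    (L : seq (lweight R * lpform Atom)) (w : R) (I : {set Atom}) :
  P_mln L I = P_lp (mln_to_lpmln L w) I.
Proof.
have ratio_eq alpha :
    W_mln L alpha I / \sum_(J : {set Atom}) W_mln L alpha J =
    W_lp (mln_to_lpmln L w) alpha I /
      \sum_(J : {set Atom} | SM (mln_to_lpmln L w) J) W_lp (mln_to_lpmln L w) alpha J.
  have -> : \sum_(J | SM (mln_to_lpmln L w) J) W_lp (mln_to_lpmln L w) alpha J =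
            \sum_J W_mln L alpha J * expR (w *+ #|Atom|).
    by apply: eq_big => J; [rewrite SM_mln_to_lpmln | rewrite W_lp_mln_to_lpmln].
  by rewrite W_lp_mln_to_lpmln normalize_scale // gt_eqF ?expR_gt0.
by rewrite /P_mln /P_lp (funext ratio_eq).
Qed.
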